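(* If two quadrilaterals in $K^2$ in standard form share the same coefficient and the same centroid, then both quadrilaterals have the same bisectors (with the same midpoints).
   Context: $K$ is a field of characteristic $\neq 2$; we work in $K^2$ inside the projective plane. A quadrilateral $Q=ABA'B'$ consists of four distinct lines $A,B,A',B'$ (sides), not all through one point, with adjacent sides ($A,B$; $B,A'$; $A',B'$; $B',A$) not parallel; opposite sides may be parallel. Vertices: $A\cap B$, $B\cap A'$, $A'\cap B'$, $B'\cap A$. The centroid is the average of the four vertices. $Q$ is in standard form if $A$ is the line $Y=0$ and $A'$ is the line $X=0$; its coefficient is the product of the slopes of $B$ and $B'$. A line $\ell$ crosses a pair $\{\ell_1,\ell_2\}$ if it is distinct from both and not parallel to both; $\mathrm{mid}_{\{\ell_1,\ell_2\}}(\ell)$ is the midpoint of the points where $\ell$ meets $\ell_1,\ell_2$ (the point at infinity of $\ell$ if one of them is at infinity). $\ell$ bisects $Q$ (is a bisector) if $\mathrm{mid}_{\mathsf P}(\ell)$ is the same for all pairs $\mathsf P$ among $\{A,A'\},\{B,B'\}$ that $\ell$ crosses; this common point is the midpoint of the bisector. A bisector is regarded as the line together with its midpoint. *)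

From HB Require Import structures.
From mathcomp Require Import all_boot all_order all_algebra.
Set Implicit Arguments. Unset Strict Implicit. Unset Printing Implicit Defensive.
Import Order.TTheory GRing.Theory.
Local Open Scope ring_scope.

Section Geometry.
Variable K : fieldType.

Definition point := (K * K)%type.

Record line := Line { la : K; lb : K; lc : K; lnz : (la != 0) || (lb != 0) }.

Definition on_line (l : line) (p : point) : bool :=
  la l * p.1 + lb l * p.2 == lc l.

Definition line_eq (l1 l2 : line) : Prop :=
  forall p, on_line l1 p = on_line l2 p.

(* parallel = same direction (an affine line is parallel to itself) *)
Definition parallel (l1 l2 : line) : bool :=
  la l1 * lb l2 == lb l1 * la l2.

Definition midpt (p q : point) : point :=
  ((p.1 + q.1) / 2%:R, (p.2 + q.2) / 2%:R).

Definition slope (l : line) : K := - la l / lb l.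

(* A quadrilateral Q = A B A' B' (sides in this cyclic order) *)
Record quad := Quad { qA : line; qB : line; qA' : line; qB' : line }.

Definition is_quad (Q : quad) : Prop :=
  (~ line_eq (qA Q) (qB Q) /\ ~ line_eq (qA Q) (qA' Q) /\ ~ line_eq (qA Q) (qB' Q) /\
   ~ line_eq (qB Q) (qA' Q) /\ ~ line_eq (qB Q) (qB' Q) /\ ~ line_eq (qA' Q) (qB' Q))
  /\ ~ (exists p, [&& on_line (qA Q) p, on_line (qB Q) p, on_line (qA' Q) p
                     & on_line (qB' Q) p])
  /\ [/\ ~~ parallel (qA Q) (qB Q), ~~ parallel (qB Q) (qA' Q),
         ~~ parallel (qA' Q) (qB' Q) & ~~ parallel (qB' Q) (qA Q)].

Definition standard (Q : quad) : Prop :=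
  (forall p, on_line (qA Q) p = (p.2 == 0)) /\
  (forall p, on_line (qA' Q) p = (p.1 == 0)).

Definition coefficient (Q : quad) : K := slope (qB Q) * slope (qB' Q).

Definition centroid (Q : quad) (g : point) : Prop :=
  exists v1 v2 v3 v4 : point,
    [/\ on_line (qA Q) v1 && on_line (qB Q) v1,
        on_line (qB Q) v2 && on_line (qA' Q) v2,
        on_line (qA' Q) v3 && on_line (qB' Q) v3,
        on_line (qB' Q) v4 && on_line (qA Q) v4 &
        g = ((v1.1 + v2.1 + v3.1 + v4.1) / 4%:R,
             (v1.2 + v2.2 + v3.2 + v4.2) / 4%:R)].

Definition crosses (l l1 l2 : line) : Prop :=
  ~ line_eq l l1 /\ ~ line_eq l l2 /\ ~ (parallel l l1 && parallel l l2).

(* mid_{l1,l2}(l) = m.  Points are taken in the projective plane, but only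
   points of l occur here, so [None] stands for the point at infinity of l
   and [Some p] for the affine point p. *)
Definition mid_is (l l1 l2 : line) (m : option point) : Prop :=
  if parallel l l1 || parallel l l2 then m = None
  else exists p1 p2 : point,
      [/\ on_line l p1, on_line l1 p1, on_line l p2, on_line l2 p2
        & m = Some (midpt p1 p2)].

Definition bisector_with (Q : quad) (l : line) (m : option point) : Prop :=
  (crosses l (qA Q) (qA' Q) \/ crosses l (qB Q) (qB' Q)) /\
  (crosses l (qA Q) (qA' Q) -> mid_is l (qA Q) (qA' Q) m) /\
  (crosses l (qB Q) (qB' Q) -> mid_is l (qB Q) (qB' Q) m).

End Geometry.

(* A line parallel to an
   axis crosses {B, B'} but would get the midpoint at infinity from {A, A'}, so
   it is a bisector only if it is that axis; its midpoint is then the midpoint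
   of the two vertices on the axis, i.e. twice the corresponding coordinate of
   the centroid.  An oblique line ax + by = e gets from {A, A'} the midpoint of
   its two intercepts, and it bisects Q iff its meeting points with B and B'
   have the same mean x-coordinate.  Clearing denominators, this condition only
   involves the product of the slopes of B and B' and the sums e1/a1 + e2/a2 and
   e1/b1 + e2/b2, i.e. the coefficient and the centroid of Q. *)

From HB Require Import structures.
From mathcomp Require Import all_boot all_order all_algebra.
From mathcomp Require Import ring.
Set Implicit Arguments. Unset Strict Implicit. Unset Printing Implicit Defensive.
Import GRing.Theory.
Local Open Scope ring_scope.

Section Lines.
Variable K : fieldType.
Implicit Types (l : line K) (p q : point K).

Definition det l1 l2 := la l1 * lb l2 - lb l1 * la l2.
Definition det_x l1 l2 := lc l1 * lb l2 - lb l1 * lc l2.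
Definition det_y l1 l2 := la l1 * lc l2 - lc l1 * la l2.
(* Junk value (0, 0) when [l1] and [l2] are parallel. *)
Definition meet l1 l2 : point K := (det_x l1 l2 / det l1 l2, det_y l1 l2 / det l1 l2).

Definition x_axis l := forall p, on_line l p = (p.2 == 0).
Definition y_axis l := forall p, on_line l p = (p.1 == 0).

Lemma parallelE l1 l2 : parallel l1 l2 = (det l1 l2 == 0).
Proof. by rewrite /det subr_eq0. Qed.

Lemma parallel_sym l1 l2 : parallel l1 l2 = parallel l2 l1.
Proof. by rewrite /parallel eq_sym [lb l1 * _]mulrC [la l1 * _]mulrC. Qed.

Lemma parallel_horizontal l l' : la l' = 0 -> lb l' != 0 -> parallel l l' = (la l == 0).
Proof. by move=> a0 b0; rewrite /parallel a0 mulr0 mulf_eq0 (negbTE b0) orbF. Qed.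

Lemma parallel_vertical l l' : lb l' = 0 -> la l' != 0 -> parallel l l' = (lb l == 0).
Proof. by move=> b0 a0; rewrite /parallel b0 mulr0 eq_sym mulf_eq0 (negbTE a0) orbF. Qed.

Lemma lb_neq0 l : la l = 0 -> lb l != 0.
Proof. by move=> a0; move: (lnz l); rewrite a0 eqxx. Qed.

Lemma la_neq0 l : lb l = 0 -> la l != 0.
Proof. by move=> b0; move: (lnz l); rewrite b0 eqxx orbF. Qed.

Lemma x_axisP l : x_axis l <-> [/\ la l = 0, lb l != 0 & lc l = 0].
Proof.
split=> [ax | [a0 b0 c0] p]; last first.
  by rewrite /on_line a0 c0 mul0r add0r mulf_eq0 (negbTE b0).
have c0 : lc l = 0.
  by move: (ax (0, 0)); rewrite /on_line /= !mulr0 addr0 eqxx eq_sym => /eqP.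
have a0 : la l = 0.
  by move: (ax (1, 0)); rewrite /on_line /= mulr1 mulr0 addr0 c0 eqxx => /eqP.
by split=> //; apply: lb_neq0.
Qed.

Lemma y_axisP l : y_axis l <-> [/\ lb l = 0, la l != 0 & lc l = 0].
Proof.
split=> [ax | [b0 a0 c0] p]; last first.
  by rewrite /on_line b0 c0 mul0r addr0 mulf_eq0 (negbTE a0).
have c0 : lc l = 0.
  by move: (ax (0, 0)); rewrite /on_line /= !mulr0 addr0 eqxx eq_sym => /eqP.
have b0 : lb l = 0.
  by move: (ax (0, 1)); rewrite /on_line /= mulr1 mulr0 add0r c0 eqxx => /eqP.
by split=> //; apply: la_neq0.
Qed.

Lemma on_line_meetl l1 l2 : ~~ parallel l1 l2 -> on_line l1 (meet l1 l2).
Proof.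
rewrite parallelE /det => d0; apply/eqP; rewrite /meet /det /det_x /det_y /=.
by field.
Qed.

Lemma on_line_meetr l1 l2 : ~~ parallel l1 l2 -> on_line l2 (meet l1 l2).
Proof.
rewrite parallelE /det => d0; apply/eqP; rewrite /meet /det /det_x /det_y /=.
by field.
Qed.

Lemma meet_unique l1 l2 p : ~~ parallel l1 l2 ->
  on_line l1 p -> on_line l2 p -> p = meet l1 l2.
Proof.
rewrite parallelE /det => d0; case: p => x y /eqP h1 /eqP h2.
by rewrite /meet /det /det_x /det_y -h1 -h2 /=; congr pair; field.
Qed.

Lemma meetC l1 l2 : meet l1 l2 = meet l2 l1.
Proof.
rewrite /meet.
have -> : det l2 l1 = - det l1 l2 by rewrite /det; ring.
have -> : det_x l2 l1 = - det_x l1 l2 by rewrite /det_x; ring.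
have -> : det_y l2 l1 = - det_y l1 l2 by rewrite /det_y; ring.
by rewrite invrN !mulrNN.
Qed.

Lemma meet_x_axis l l' : x_axis l' -> la l != 0 -> meet l l' = (lc l / la l, 0).
Proof.
move=> /x_axisP [a0 b0 c0] a_nz.
rewrite /meet /det /det_x /det_y a0 c0; congr pair; last by rewrite !mulr0 subrr mul0r.
by field; rewrite a_nz b0.
Qed.

Lemma meet_y_axis l l' : y_axis l' -> lb l != 0 -> meet l l' = (0, lc l / lb l).
Proof.
move=> /y_axisP [b0 a0 c0] b_nz.
rewrite /meet /det /det_x /det_y b0 c0; congr pair; first by rewrite !mulr0 subrr mul0r.
by field; rewrite b_nz oppr_eq0 mulf_neq0.
Qed.

Lemma line_eq_parallel l1 l2 : line_eq l1 l2 -> parallel l1 l2.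
Proof.
move=> E; apply/negPn/negP => npar.
move: (on_line_meetl npar) (on_line_meetr npar).
case: (meet l1 l2) => x y; rewrite /on_line /= => /eqP on1 /eqP on2.
(* The translate of the meeting point along [l1] stays on [l1] but leaves [l2]. *)
have : on_line l1 (x + lb l1, y - la l1) by apply/eqP; rewrite -on1 /=; ring.
rewrite E /on_line /=.
rewrite (_ : la l2 * _ + _ = lc l2 - det l1 l2); last by rewrite -on2 /det; ring.
by rewrite -subr_eq0 addrAC subrr add0r oppr_eq0 -parallelE (negbTE npar).
Qed.

Lemma line_eq_origin l l' : line_eq l l' -> lc l' = 0 -> lc l = 0.
Proof.
by move=> E c0; move: (E (0, 0)); rewrite /on_line /= !mulr0 addr0 c0 eqxx => /eqP.
Qed.

Lemma line_eq_scale l1 l2 t : t != 0 ->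
  la l2 = t * la l1 -> lb l2 = t * lb l1 -> lc l2 = t * lc l1 -> line_eq l1 l2.
Proof.
by move=> t0 ea eb ec p; rewrite /on_line ea eb ec -!mulrA -mulrDr (inj_eq (mulfI t0)).
Qed.

Lemma line_eq_det_x l l1 : lb l != 0 -> parallel l l1 ->
  line_eq l l1 <-> det_x l l1 = 0.
Proof.
move=> b0 par; split=> [E | /eqP].
  move: (E (0, lc l / lb l)); rewrite /on_line /= !mulr0 !add0r [lb l * _]mulrC.
  by rewrite divfK // eqxx => /esym/eqP h; rewrite /det_x -h; field.
rewrite /det_x subr_eq0 => /eqP dx.
have b1 : lb l1 != 0.
  apply: contraTneq par => b10; rewrite /parallel b10 mulr0 eq_sym mulf_eq0.
  by rewrite (negbTE b0) la_neq0.
apply: (line_eq_scale (t := lb l1 / lb l)); first by rewrite mulf_neq0 ?invr_neq0.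
- by apply: (mulfI b0); rewrite -(eqP par); field.
- by rewrite divfK.
- by apply: (mulfI b0); rewrite -dx; field.
Qed.

Lemma crosses_sym l l1 l2 : crosses l l1 l2 <-> crosses l l2 l1.
Proof. by rewrite /crosses andbC; tauto. Qed.

Lemma crosses_nonparallel l l1 l2 :
  ~~ parallel l l1 -> ~~ parallel l l2 -> crosses l l1 l2.
Proof.
move=> p1 p2; split; [|split]; try by move/line_eq_parallel; apply/negP.
by rewrite (negbTE p1).
Qed.

Lemma midptC p q : midpt p q = midpt q p.
Proof. by rewrite /midpt addrC [p.2 + _]addrC. Qed.

Lemma mid_is_sym l l1 l2 m : mid_is l l1 l2 m <-> mid_is l l2 l1 m.
Proof.
rewrite /mid_is orbC; case: ifP => // _.
by split=> -[p1 [p2 [? ? ? ? ->]]]; exists p2, p1; rewrite midptC.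
Qed.

Lemma crosses_mid_is_sym l l1 l2 m :
  (crosses l l1 l2 -> mid_is l l1 l2 m) <-> (crosses l l2 l1 -> mid_is l l2 l1 m).
Proof. by split=> H /crosses_sym /H /mid_is_sym. Qed.

Lemma mid_is_parallel l l1 l2 m :
  parallel l l1 || parallel l l2 -> mid_is l l1 l2 m -> m = None.
Proof. by rewrite /mid_is => ->. Qed.

Lemma mid_is_nonparallel l l1 l2 m : ~~ parallel l l1 -> ~~ parallel l l2 ->
  mid_is l l1 l2 m <-> m = Some (midpt (meet l l1) (meet l l2)).
Proof.
move=> p1 p2; rewrite /mid_is (negbTE p1) (negbTE p2) /=.
split=> [[q1 [q2 [a1 b1 a2 b2 ->]]] | ->]; last first.
  exists (meet l l1), (meet l l2).
  by split=> //; first [apply: on_line_meetl | apply: on_line_meetr].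
by rewrite -(meet_unique p1 a1 b1) -(meet_unique p2 a2 b2).
Qed.

Lemma on_line_x_inj l p q : lb l != 0 ->
  on_line l p -> on_line l q -> p.1 = q.1 -> p = q.
Proof.
move=> b0 /eqP hp /eqP hq ex; case: p q ex hp hq => [x y] [x' y'] /= <- hp hq.
by congr pair; apply: (mulfI b0); apply: (addrI (la l * x)); rewrite hp hq.
Qed.

Section TwoNeq0.
Hypothesis two_nz : (2%:R : K) != 0.

Lemma on_line_midpt l p q : on_line l p -> on_line l q -> on_line l (midpt p q).
Proof.
move=> /eqP hp /eqP hq; apply/eqP; rewrite /midpt /=.
have -> : la l * ((p.1 + q.1) / 2%:R) + lb l * ((p.2 + q.2) / 2%:R) =
    ((la l * p.1 + lb l * p.2) + (la l * q.1 + lb l * q.2)) / 2%:R by field.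
by rewrite hp hq; field.
Qed.

Lemma crosses_mid_is_parallel l l1 l2 M : lb l != 0 ->
  parallel l l1 -> ~~ parallel l l2 ->
  (crosses l l1 l2 -> mid_is l l1 l2 (Some M)) <-> det_x l l1 = 0.
Proof.
move=> b0 p1 p2; split=> [H | /(line_eq_det_x b0 p1) E [nE _]]; last by case: (nE E).
apply/eqP; apply: contraT => dx.
have cr : crosses l l1 l2.
  split; first by move/(line_eq_det_x b0 p1)/eqP; apply/negP.
  split; first by move/line_eq_parallel; apply/negP.
  by rewrite (negbTE p2) andbF.
by have /mid_is_parallel := H cr; rewrite p1 => /(_ isT).
Qed.

Lemma mid_is_Some l l1 l2 M : lb l != 0 -> on_line l M ->
  ~~ parallel l l1 -> ~~ parallel l l2 ->
  mid_is l l1 l2 (Some M) <->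
  det_x l l1 * det l l2 + det_x l l2 * det l l1 = 2%:R * M.1 * det l l1 * det l l2.
Proof.
move=> b0 onM p1 p2; rewrite mid_is_nonparallel //.
set N := midpt _ _.
have onN : on_line l N by apply: on_line_midpt; apply: on_line_meetl.
have d1 : det l l1 != 0 by rewrite -parallelE.
have d2 : det l l2 != 0 by rewrite -parallelE.
have -> : det_x l l1 * det l l2 + det_x l l2 * det l l1 = 2%:R * N.1 * det l l1 * det l l2.
  by rewrite /N /midpt /meet /=; field; rewrite two_nz d1 d2.
split=> [[->] // | /(mulIf d2) /(mulIf d1) /(mulfI two_nz) eqx].
by congr Some; apply: on_line_x_inj b0 onM onN (esym eqx).
Qed.

Lemma crosses_mid_isE l l1 l2 M : lb l != 0 -> on_line l M ->
  (crosses l l1 l2 -> mid_is l l1 l2 (Some M)) <->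
  det_x l l1 * det l l2 + det_x l l2 * det l l1 = 2%:R * M.1 * det l l1 * det l l2.
Proof.
move=> b0 onM.
have [p1|p1] := boolP (parallel l l1); have [p2|p2] := boolP (parallel l l2).
- move: (p1) (p2); rewrite !parallelE => /eqP-> /eqP->; rewrite !mulr0 addr0.
  by split=> // _ [_ [_]]; rewrite p1 p2.
- rewrite crosses_mid_is_parallel //; move: p1; rewrite parallelE => /eqP->.
  rewrite !mulr0 !mul0r addr0; split=> [-> | /eqP]; first by rewrite mul0r.
  by rewrite mulf_eq0 -parallelE (negbTE p2) orbF => /eqP.
- apply: (iff_trans (crosses_mid_is_sym _ _ _ _)).
  rewrite crosses_mid_is_parallel //; move: p2; rewrite parallelE => /eqP->.
  rewrite !mulr0 add0r; split=> [-> | /eqP]; first by rewrite mul0r.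
  by rewrite mulf_eq0 -parallelE (negbTE p1) orbF => /eqP.
- rewrite -mid_is_Some //; split=> [H | H _ //].
  exact/H/crosses_nonparallel.
Qed.

End TwoNeq0.
End Lines.

Section Bisectors.
Variable K : fieldType.
Implicit Types (Q : quad K) (l : line K) (m : option (point K)).

Lemma bisector_with_nonparallel Q l m :
  ~~ parallel l (qA Q) -> ~~ parallel l (qA' Q) ->
  bisector_with Q l m <->
  m = Some (midpt (meet l (qA Q)) (meet l (qA' Q))) /\
  (crosses l (qB Q) (qB' Q) -> mid_is l (qB Q) (qB' Q) m).
Proof.
move=> pA pA'; have cA := crosses_nonparallel pA pA'.
rewrite /bisector_with -(mid_is_nonparallel _ pA pA').
by split=> [[_ [/(_ cA) hA hB]] // | [hA hB]]; split; [left | split].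
Qed.

Lemma bisector_with_parallel Q l m :
  parallel l (qA Q) || parallel l (qA' Q) ->
  ~~ parallel l (qB Q) -> ~~ parallel l (qB' Q) ->
  bisector_with Q l m <->
  ~ crosses l (qA Q) (qA' Q) /\ m = Some (midpt (meet l (qB Q)) (meet l (qB' Q))).
Proof.
move=> pA pB pB'; have cB := crosses_nonparallel pB pB'.
rewrite /bisector_with -(mid_is_nonparallel _ pB pB').
split=> [[_ [hA /(_ cB) hB]] | [ncA hB]]; last by split; [right | split].
split=> // cA; move: (hB); rewrite (mid_is_nonparallel _ pB pB').
by rewrite (mid_is_parallel pA (hA cA)).
Qed.

End Bisectors.

Section StandardForm.
Variable K : fieldType.
Hypothesis two_nz : (2%:R : K) != 0.
Implicit Types (l : line K) (m : option (point K)).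

Definition bisector_eqn (c : K) (g : point K) l :=
  lc l * la l ^+ 2 - c * lc l * lb l ^+ 2
  - 4%:R * g.2 * la l ^+ 2 * lb l + 4%:R * c * g.1 * la l * lb l ^+ 2.

Definition bisector_spec (c : K) (g : point K) l m : Prop :=
  if la l == 0 then lc l = 0 /\ m = Some (2%:R * g.1, 0)
  else if lb l == 0 then lc l = 0 /\ m = Some (0, 2%:R * g.2)
  else m = Some (midpt (lc l / la l, 0) (0, lc l / lb l)) /\ bisector_eqn c g l = 0.

Variable Q : quad K.
Hypotheses (hQ : is_quad Q) (sQ : standard Q).
Local Notation A := (qA Q).
Local Notation B := (qB Q).
Local Notation A' := (qA' Q).
Local Notation B' := (qB' Q).

Let xA : x_axis A := sQ.1.
Let yA' : y_axis A' := sQ.2.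

Lemma parallel_qA l : parallel l A = (la l == 0).
Proof. by have [a0 b0 _] := (x_axisP A).1 xA; apply: parallel_horizontal. Qed.

Lemma parallel_qA' l : parallel l A' = (lb l == 0).
Proof. by have [b0 a0 _] := (y_axisP A').1 yA'; apply: parallel_vertical. Qed.

Lemma adjacent_nonparallel :
  [/\ ~~ parallel B A, ~~ parallel B A', ~~ parallel B' A' & ~~ parallel B' A].
Proof.
by case: hQ => _ [_ [pAB pBA' pA'B' pB'A]]; rewrite parallel_sym (parallel_sym B').
Qed.

Lemma qB_coefs_neq0 : [/\ la B != 0, lb B != 0, la B' != 0 & lb B' != 0].
Proof. by have [] := adjacent_nonparallel; rewrite !parallel_qA !parallel_qA'. Qed.

Lemma centroid_standard g : centroid Q g ->
  g = ((lc B / la B + lc B' / la B') / 4%:R, (lc B / lb B + lc B' / lb B') / 4%:R).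
Proof.
case=> v1 [v2 [v3 [v4 [/andP [v1A v1B] /andP [v2B v2A']]]]].
move=> /andP [v3A' v3B'] /andP [v4B' v4A] ->.
have [pBA pBA' pB'A' pB'A] := adjacent_nonparallel; have [aB bB aB' bB'] := qB_coefs_neq0.
rewrite (meet_unique pBA v1B v1A) (meet_unique pBA' v2B v2A').
rewrite (meet_unique pB'A' v3B' v3A') (meet_unique pB'A v4B' v4A).
by rewrite !(meet_x_axis xA) // !(meet_y_axis yA') //= !addr0 !add0r.
Qed.

Lemma not_crosses_axes l : parallel l A || parallel l A' ->
  ~ crosses l A A' <-> lc l = 0.
Proof.
have [_ _ cA] := (x_axisP A).1 xA; have [_ _ cA'] := (y_axisP A').1 yA'.
move=> pl; split=> [ncr | c0 [nA [nA' _]]].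
  apply/eqP/negPn/negP => c0; apply: ncr; split; [|split].
  - by move/line_eq_origin/(_ cA)/eqP; apply/negP.
  - by move/line_eq_origin/(_ cA')/eqP; apply/negP.
  - by rewrite parallel_qA parallel_qA' => /andP [/eqP /lb_neq0 /negP].
case/orP: pl; rewrite ?parallel_qA ?parallel_qA' => /eqP z0.
  by apply: nA => p; rewrite xA; apply: (x_axisP l).2; rewrite lb_neq0.
by apply: nA' => p; rewrite yA'; apply: (y_axisP l).2; rewrite la_neq0.
Qed.

Lemma bisector_axis_parallel l m : parallel l A || parallel l A' ->
  bisector_with Q l m <-> lc l = 0 /\ m = Some (midpt (meet l B) (meet l B')).
Proof.
move=> pl; have [aB bB aB' bB'] := qB_coefs_neq0.
have [npB npB'] : ~~ parallel l B /\ ~~ parallel l B'.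
  rewrite !(parallel_sym l); case/orP: pl; rewrite ?parallel_qA ?parallel_qA' => /eqP z0.
    by rewrite !parallel_horizontal ?lb_neq0.
  by rewrite !parallel_vertical ?la_neq0.
by rewrite bisector_with_parallel // not_crosses_axes.
Qed.

Variable g : point K.
Hypothesis hg : centroid Q g.

Let four_nz : (4%:R : K) != 0.
Proof. by rewrite (_ : 4 = 2 * 2)%N // natrM mulf_neq0. Qed.

Lemma bisector_horizontal l m : la l = 0 ->
  bisector_with Q l m <-> lc l = 0 /\ m = Some (2%:R * g.1, 0).
Proof.
move=> a0; rewrite bisector_axis_parallel ?parallel_qA ?a0 ?eqxx //.
suff eM : lc l = 0 -> midpt (meet l B) (meet l B') = (2%:R * g.1, 0).
  by split=> -[c0 ->]; rewrite eM.
move=> c0; have xl : x_axis l by apply/x_axisP; rewrite lb_neq0.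
have [aB _ aB' _] := qB_coefs_neq0.
rewrite meetC (meetC l B') !(meet_x_axis xl) // (centroid_standard hg) /midpt /=.
by congr pair; field; rewrite ?two_nz ?four_nz ?aB ?aB'.
Qed.

Lemma bisector_vertical l m : lb l = 0 ->
  bisector_with Q l m <-> lc l = 0 /\ m = Some (0, 2%:R * g.2).
Proof.
move=> b0; rewrite bisector_axis_parallel ?parallel_qA' ?b0 ?eqxx ?orbT //.
suff eM : lc l = 0 -> midpt (meet l B) (meet l B') = (0, 2%:R * g.2).
  by split=> -[c0 ->]; rewrite eM.
move=> c0; have yl : y_axis l by apply/y_axisP; rewrite la_neq0.
have [_ bB _ bB'] := qB_coefs_neq0.
rewrite meetC (meetC l B') !(meet_y_axis yl) // (centroid_standard hg) /midpt /=.
by congr pair; field; rewrite ?two_nz ?four_nz ?bB ?bB'.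
Qed.

Lemma bisector_oblique l m : la l != 0 -> lb l != 0 ->
  bisector_with Q l m <->
  m = Some (midpt (lc l / la l, 0) (0, lc l / lb l)) /\
  bisector_eqn (coefficient Q) g l = 0.
Proof.
move=> a0 b0; have [aB bB aB' bB'] := qB_coefs_neq0.
rewrite bisector_with_nonparallel ?parallel_qA ?parallel_qA' //.
rewrite (meet_x_axis xA) // (meet_y_axis yA') //.
set M := midpt _ _.
have onM : on_line l M.
  by apply: on_line_midpt => //; rewrite /on_line /=; apply/eqP; field.
have key : (det_x l B * det l B' + det_x l B' * det l B
            - 2%:R * M.1 * det l B * det l B') * la l =
           bisector_eqn (coefficient Q) g l * (lb B * lb B').
  rewrite /bisector_eqn /coefficient /slope (centroid_standard hg) /M /midpt /det /det_x /=.
  by field; rewrite ?two_nz ?four_nz ?aB ?aB' ?bB ?bB' ?a0 ?b0.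
have eqnE : (crosses l B B' -> mid_is l B B' (Some M)) <->
            bisector_eqn (coefficient Q) g l = 0.
  rewrite crosses_mid_isE //; split=> E.
    by apply: (mulIf (mulf_neq0 bB bB')); rewrite mul0r -key E subrr mul0r.
  by apply/eqP; rewrite -subr_eq0; apply/eqP/(mulIf a0); rewrite key E !mul0r.
by split=> -[em H]; split=> //; [apply/eqnE; rewrite -em | rewrite em; apply/eqnE].
Qed.

Lemma bisector_withE l m :
  bisector_with Q l m <-> bisector_spec (coefficient Q) g l m.
Proof.
rewrite /bisector_spec; case: eqP => [a0 | /eqP a0]; first exact: bisector_horizontal.
by case: eqP => [b0 | /eqP b0]; [apply: bisector_vertical | apply: bisector_oblique].
Qed.

End StandardForm.

Theorem corollary4p6 (K : fieldType) (charK : (2%:R : K) != 0)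
    (Q1 Q2 : quad K) :
  is_quad Q1 -> is_quad Q2 -> standard Q1 -> standard Q2 ->
  coefficient Q1 = coefficient Q2 ->
  (exists g : point K, centroid Q1 g /\ centroid Q2 g) ->
  forall (l : line K) (m : option (point K)),
    bisector_with Q1 l m <-> bisector_with Q2 l m.
Proof.
move=> q1 q2 s1 s2 c12 [g [g1 g2]] l m.
by rewrite (bisector_withE charK q1 s1 g1) (bisector_withE charK q2 s2 g2) c12.
Qed.
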